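(* Let $h>k>2$ be integers and let $G$ be the graph with vertex set $\{0,1,\dots,2^h\}$ whose edge multiset consists of $k$ parallel edges between $i-1$ and $i$ for each $1\le i\le 2^h$, together with one edge $\{j2^i,(j+1)2^i\}$ for each $1\le i\le h$ and each $0\le j<2^{h-i}$. Then $$\inf\Big\{\max_{\emptyset\ne S\subsetneq V}\frac{1}{|E(S,\overline S)|}\sum_{e\in E(S,\overline S)}\mathcal R_D(e)\ :\ D\succ0,\ D\preceq_\square L_G\Big\}\ \ge\ \frac{h^2}{8(h+k)^2}.$$
   Context: $E(S,\overline S)$ is the multiset of edges with exactly one endpoint in $S$ (averages count parallel edges with multiplicity). For each edge $e=\{u,v\}$ fix an orientation, $\chi_e=\mathbf 1_u-\mathbf 1_v$, $L_G=\sum_e\chi_e\chi_e^\intercal$, $\mathcal R_D(e)=\chi_e^\intercal D^{-1}\chi_e$ for symmetric positive definite $D$; $A\preceq_\square B$ means $\mathbf 1_S^\intercal A\mathbf 1_S\le\mathbf 1_S^\intercal B\mathbf 1_S$ for all $\emptyset\ne S\subsetneq V$. *)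

From HB Require Import structures.
From mathcomp Require Import all_boot all_order all_algebra.
Set Implicit Arguments. Unset Strict Implicit. Unset Printing Implicit Defensive.
Import Order.TTheory GRing.Theory Num.Theory.
Local Open Scope ring_scope.

Definition edgesG (h k : nat) : seq (nat * nat) :=
  flatten [seq nseq k (i, i.+1) | i <- iota 0 (2 ^ h)] ++
  flatten [seq [seq (j * 2 ^ i, j.+1 * 2 ^ i)%N | j <- iota 0 (2 ^ (h - i))]
          | i <- iota 1 h].

Definition vtx (h : nat) (u : nat) : 'I_((2 ^ h).+1) := inord u.

Definition ind (R : nzRingType) (n : nat) (S : {set 'I_n}) : 'cV[R]_n :=
  \col_i (if i \in S then 1 else 0).

Definition chi (R : nzRingType) (h : nat) (e : nat * nat) : 'cV[R]_((2 ^ h).+1) :=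
  ind R [set vtx h e.1] - ind R [set vtx h e.2].

Definition lapG (R : comNzRingType) (h k : nat) : 'M[R]_((2 ^ h).+1) :=
  \sum_(e <- edgesG h k) (chi R h e *m (chi R h e)^T).

Definition qf (R : nzRingType) (n : nat) (A : 'M[R]_n) (x : 'cV[R]_n) : R :=
  ((x^T *m A *m x) 0 0).

Definition posdef (R : numDomainType) (n : nat) (D : 'M[R]_n) : Prop :=
  D^T = D /\ forall x : 'cV[R]_n, x != 0 -> 0 < qf D x.

Definition cut_le (R : numDomainType) (n : nat) (A B : 'M[R]_n) : Prop :=
  forall S : {set 'I_n}, S != set0 -> S != [set: 'I_n] ->
    qf A (ind R S) <= qf B (ind R S).

Definition effres (R : numFieldType) (h : nat) (D : 'M[R]_((2 ^ h).+1))
  (e : nat * nat) : R := qf (invmx D) (chi R h e).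
Arguments effres {R} h D e.

Definition cutEdges (h k : nat) (S : {set 'I_((2 ^ h).+1)}) : seq (nat * nat) :=
  [seq e <- edgesG h k | (vtx h e.1 \in S) != (vtx h e.2 \in S)].
Arguments cutEdges h k S : clear implicits.

Definition cutAvg (R : numFieldType) (h k : nat) (D : 'M[R]_((2 ^ h).+1))
  (S : {set 'I_((2 ^ h).+1)}) : R :=
  (\sum_(e <- cutEdges h k S) effres h D e) / (size (cutEdges h k S))%:R.
Arguments cutAvg {R} h k D S.

From HB Require Import structures.
From mathcomp Require Import all_boot all_order all_algebra.
From mathcomp Require Import ring lra zify.
Import Order.TTheory GRing.Theory Num.Theory.
Local Open Scope ring_scope.
Set Implicit Arguments. Unset Strict Implicit. Unset Printing Implicit Defensive.

(* Only prefix cuts P_m = {0, ..., m-1} are needed.  An edge (a, b), a < b, crosses exactly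
   b - a of them, so summing the resistance across all prefix cuts gives
   sum_e (b - a) R_D(e), while the cut sizes add up to 2^h (k + h).
   Group the prefix indicators into dyadic blocks y_{l,j} and let
   F_l = sum_j y_{l,j}^T D y_{l,j} / 2^l.  By the parallelogram law, F_l - F_{l+1} is the
   D-energy of the differences of sibling blocks, and the bound
   R_D(e) >= 2 t chi_e^T y - t^2 y^T D y, applied to the two level-l edges spanning a pair
   of siblings, pays for that loss.  Summing over the levels telescopes to F_1 - F_h <= F_0,
   and D <=_box L_G bounds F_0 by the total cut size.  With the optimal t the average
   resistance over all prefix cuts exceeds h^2 / (8 (h + k)^2), so some prefix cut does. *)


Definition vdot (R : nzRingType) (n : nat) (u v : 'cV[R]_n) : R := (u^T *m v) 0 0.

Lemma trmx11E (R : nzRingType) (A : 'M[R]_1) : A^T 0 0 = A 0 0.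
Proof. by rewrite mxE. Qed.

Lemma vdotC (R : comNzRingType) n (u v : 'cV[R]_n) : vdot u v = vdot v u.
Proof. by rewrite /vdot -trmx11E trmx_mul trmxK. Qed.

Lemma vdotBr (R : nzRingType) n (u v w : 'cV[R]_n) :
  vdot u (v - w) = vdot u v - vdot u w.
Proof. by rewrite /vdot mulmxBr !mxE. Qed.

Lemma vdotBl (R : nzRingType) n (u v w : 'cV[R]_n) :
  vdot (u - v) w = vdot u w - vdot v w.
Proof. by rewrite /vdot linearB mulmxBl !mxE. Qed.

Lemma vdot_sumr (R : nzRingType) n (u : 'cV[R]_n) (I : Type) (r : seq I)
    (P : pred I) (F : I -> 'cV[R]_n) :
  vdot u (\sum_(i <- r | P i) F i) = \sum_(i <- r | P i) vdot u (F i).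
Proof. by rewrite /vdot mulmx_sumr summxE. Qed.

Lemma qf_rank1 (R : comNzRingType) n (c x : 'cV[R]_n) :
  qf (c *m c^T) x = vdot c x ^+ 2.
Proof.
rewrite /qf -mulmxA !mulmxA -mulmxA mxE big_ord1 expr2.
by congr (_ * _); rewrite vdotC /vdot -trmx11E trmx_mul trmxK.
Qed.

Lemma sum_pairs (V : nmodType) (g : nat -> V) M :
  \sum_(0 <= j < 2 * M) g j = \sum_(0 <= j < M) (g (2 * j)%N + g (2 * j).+1).
Proof.
elim: M => [|M IH]; first by rewrite !big_geq.
rewrite [RHS]big_nat_recr //= -IH mulnS.
by rewrite !big_nat_recr //= addrA.
Qed.

Lemma itv_mul_divn d i s : (0 < d)%N -> (i * d <= s < i.+1 * d)%N = (s %/ d == i)%N.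
Proof. by move=> d_gt0; rewrite eqn_leq leq_divRL // andbC -ltn_divLR // ltnS. Qed.

Section QuadraticForm.
Variables (R : realFieldType) (n : nat) (D : 'M[R]_n).

Definition form (u v : 'cV[R]_n) : R := (u^T *m D *m v) 0 0.

Lemma formDl u v w : form (u + v) w = form u w + form v w.
Proof. by rewrite /form linearD /= !mulmxDl mxE. Qed.

Lemma formZl a u w : form (a *: u) w = a * form u w.
Proof. by rewrite /form linearZ /= -!scalemxAl mxE. Qed.

Lemma formNl u w : form (- u) w = - form u w.
Proof. by rewrite -scaleN1r formZl mulN1r. Qed.

Hypothesis D_sym : D^T = D.

Lemma formC u v : form u v = form v u.
Proof. by rewrite /form -trmx11E !trmx_mul trmxK D_sym mulmxA. Qed.

Lemma formDr u v w : form w (u + v) = form w u + form w v.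
Proof. by rewrite formC formDl !(formC w). Qed.

Lemma formZr a u w : form w (a *: u) = a * form w u.
Proof. by rewrite formC formZl formC. Qed.

Lemma formNr u w : form w (- u) = - form w u.
Proof. by rewrite formC formNl formC. Qed.

Lemma qf_parallelogram u v :
  qf D (u + v) + qf D (u - v) = 2 * qf D u + 2 * qf D v.
Proof. rewrite /qf -!/(form _ _) !formDl !formDr !formNl !formNr (formC v u); ring. Qed.

Hypothesis D_pos : forall x : 'cV[R]_n, x != 0 -> 0 < qf D x.

Lemma qf_ge0 x : 0 <= qf D x.
Proof.
have [->|/D_pos/ltW //] := eqVneq x 0.
by rewrite /qf mulmx0 mxE.
Qed.

Lemma posdef_unitmx : D \in unitmx.
Proof.
rewrite -row_free_unit -kermx_eq0; apply/negPn/negP => /rowV0Pn [v].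
rewrite sub_kermx => /eqP vD vn0.
have : v^T != 0 by rewrite -(inj_eq (@trmx_inj _ _ _)) trmxK linear0.
by move/D_pos; rewrite /qf trmxK vD mul0mx mxE ltxx.
Qed.

(* Half of the variational formula c^T D^-1 c = max_y (2 c^T y - y^T D y):
   expand 0 <= qf D (t y - D^-1 c). *)
Lemma qf_invmx_ge (c y : 'cV[R]_n) (t : R) :
  2 * t * vdot c y - t ^+ 2 * qf D y <= qf (invmx D) c.
Proof.
set z := invmx D *m c.
have Dz : D *m z = c by rewrite /z mulmxA mulmxV ?posdef_unitmx // mul1mx.
have sq_ge0 := qf_ge0 (t *: y - z).
rewrite /qf -/(form _ _) formDl !formDr !formZl !formZr !formNl !formNr in sq_ge0.
have yz : form y z = vdot c y by rewrite vdotC /form /vdot -mulmxA Dz.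
have zz : form z z = qf (invmx D) c.
  by rewrite /form -mulmxA Dz -/(vdot z c) vdotC /vdot /z /qf mulmxA.
rewrite (formC z y) yz zz -[form y y]/(qf D y) in sq_ge0.
rewrite expr2; lra.
Qed.

Lemma qf_invmx_ge0 c : 0 <= qf (invmx D) c.
Proof. by have := qf_invmx_ge c 0 0; rewrite !(mul0r, mulr0, expr0n) subr0. Qed.

Lemma qf_invmx_pair_ge (c1 c2 y : 'cV[R]_n) (x tau : R) : 0 < x ->
  vdot c1 y = x -> vdot c2 y = - x ->
  tau * (2 * x) - tau ^+ 2 * (qf D y / (2 * x)) <=
  x * qf (invmx D) c1 + x * qf (invmx D) c2.
Proof.
move=> x_gt0 c1y c2y; set t := tau / (2 * x).
have := qf_invmx_ge c1 y t; have := qf_invmx_ge c2 y (- t).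
rewrite c1y c2y => le2 le1.
have -> : tau * (2 * x) - tau ^+ 2 * (qf D y / (2 * x)) =
    x * (2 * t * x - t ^+ 2 * qf D y) + x * (2 * - t * - x - (- t) ^+ 2 * qf D y).
  by rewrite /t; field; rewrite lt0r_neq0.
by rewrite lerD // ler_wpM2l // ltW.
Qed.

End QuadraticForm.

Section PrefixCuts.
Variables (R : comNzRingType) (h k : nat).
Local Notation N := (2 ^ h)%N.
Local Notation V := 'I_N.+1.

Lemma vtxK a : (a <= N)%N -> vtx h a = a :> nat.
Proof. by move=> aN; rewrite /vtx inordK. Qed.

Definition prefix (m : nat) : {set V} := [set v : V | (v < m)%N].

Lemma prefix_neq0 m : (0 < m)%N -> prefix m != set0.
Proof. by move=> m_gt0; apply/set0Pn; exists ord0; rewrite inE. Qed.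

Lemma prefix_neqT m : (m <= N)%N -> prefix m != [set: V].
Proof.
move=> mN; apply/negP => /eqP prefixT.
have : (ord_max : V) \in prefix m by rewrite prefixT inE.
by rewrite inE /= ltnNge mN.
Qed.

Lemma vdot_ind (S : {set V}) (y : 'cV[R]_N.+1) :
  vdot (ind R S) y = \sum_(i in S) y i 0.
Proof.
rewrite /vdot mxE [RHS]big_mkcond /=; apply: eq_bigr => i _.
by rewrite !mxE; case: (i \in S); rewrite ?mul1r ?mul0r.
Qed.

Lemma vdot_chi a b (y : 'cV[R]_N.+1) :
  vdot (chi R h (a, b)) y = y (vtx h a) 0 - y (vtx h b) 0.
Proof. by rewrite /chi vdotBl !vdot_ind !big_set1. Qed.

Lemma vdot_chi_prefix a b s : (a <= b <= N)%N ->
  vdot (chi R h (a, b)) (ind R (prefix s.+1)) = ((a <= s < b)%N : nat)%:R.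
Proof.
move=> /andP[ab bN]; have aN := leq_trans ab bN.
rewrite vdot_chi !mxE !inE !vtxK // !ltnS.
case: (leqP a s) => [a_le_s|s_lt_a]; case: (leqP b s) => [b_le_s|s_lt_b] /=;
  rewrite ?subrr ?subr0 //.
by move: (leq_trans ab b_le_s); rewrite leqNgt s_lt_a.
Qed.

Lemma qf_lapG_ind (S : {set V}) :
  qf (lapG R h k) (ind R S) = (size (cutEdges h k S))%:R.
Proof.
rewrite /lapG /qf mulmx_sumr mulmx_suml summxE.
rewrite /cutEdges size_filter -sum1_count natr_sum [RHS]big_mkcond /=.
apply: eq_bigr => -[a b] _.
rewrite -/(qf _ _) qf_rank1 vdot_chi /ind !mxE /=.
by case: (vtx h a \in S); case: (vtx h b \in S);
  rewrite /= ?subrr ?subr0 ?sub0r ?sqrrN ?expr1n ?expr0n.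
Qed.

Lemma edgesG_ordered : all (fun e => (e.1 < e.2 <= N)%N) (edgesG h k).
Proof.
rewrite /edgesG all_cat; apply/andP; split.
  apply/allP => e /flattenP [s /mapP [i]]; rewrite mem_iota => /andP[_ iN] ->.
  by move/nseqP => [-> _]; rewrite /= leqnn /= add0n in iN *.
apply/allP => e /flattenP [s /mapP [i]]; rewrite mem_iota => /andP[i_gt0 ih] ->.
move/mapP => [j]; rewrite mem_iota add0n => /andP[_ jlt] ->.
rewrite /= ltn_pmul2r ?expn_gt0 // ltnSn /=.
rewrite add1n ltnS in ih.
by rewrite -(subnK ih) expnD leq_pmul2r ?expn_gt0.
Qed.

Lemma sum_itv_indicator (a b M : nat) : (a <= b <= M)%N ->
  \sum_(0 <= m < M) ((a <= m < b)%N : nat)%:R = (b - a)%:R :> R.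
Proof.
move=> /andP[ab bM].
rewrite (@big_cat_nat _ _ _ a 0 M) ?(leq_trans ab) //= (@big_cat_nat _ _ _ b a M) //=.
rewrite big1_seq ?add0r; last first.
  by move=> i /andP[_]; rewrite mem_index_iota => /andP[_ ia]; rewrite leqNgt ia.
rewrite [X in _ + X]big1_seq ?addr0; last first.
  by move=> i /andP[_]; rewrite mem_index_iota => /andP[bi _]; rewrite ltnNge bi andbF.
rewrite big_nat_cond (eq_bigr (fun _ => 1)); last by move=> i /andP[/andP[-> ->]].
by rewrite -big_nat_cond sumr_const_nat.
Qed.

Lemma sum_prefix_cuts (f : nat * nat -> R) :
  \sum_(0 <= m < N) \sum_(e <- cutEdges h k (prefix m.+1)) f e =
  \sum_(e <- edgesG h k) (e.2 - e.1)%:R * f e.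
Proof.
under eq_bigr => m _ do rewrite big_filter big_mkcond /=.
rewrite exchange_big /= big_seq_cond [RHS]big_seq_cond.
apply: eq_bigr => -[a b] /andP[e_in _].
have /andP[ab bN] := allP edgesG_ordered _ e_in; rewrite /= in ab bN.
have aN := leq_trans (ltnW ab) bN.
rewrite -(@sum_itv_indicator a b N) ?(ltnW ab) // mulr_suml; apply: eq_bigr => m _.
rewrite !inE !vtxK // !ltnS.
case: (leqP a m) => am; case: (leqP b m) => bm /=; rewrite ?mul0r ?mul1r //.
by move: am; rewrite ltnNge (leq_trans (ltnW ab) bm).
Qed.

Lemma big_edgesG (F : nat * nat -> R) :
  \sum_(e <- edgesG h k) F e =
  \sum_(i <- iota 0 N) F (i, i.+1) *+ k +
  \sum_(l <- iota 1 h) \sum_(j <- iota 0 (2 ^ (h - l))) F (j * 2 ^ l, j.+1 * 2 ^ l)%N.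
Proof.
rewrite /edgesG big_cat !big_flatten !big_map /=; congr (_ + _).
  by apply: eq_bigr => i _; rewrite big_nseq; elim: k => //= k' ->; rewrite mulrS.
by apply: eq_bigr => i _; rewrite big_map.
Qed.

Lemma sum_edge_length :
  \sum_(e <- edgesG h k) (e.2 - e.1)%:R = (N * (k + h))%:R :> R.
Proof.
rewrite big_edgesG /=.
under eq_bigr => i _ do rewrite subSnn.
under [X in _ + X]eq_bigr => l _ do under eq_bigr => j _ do rewrite -mulnBl subSnn mul1n.
rewrite big_const_seq iter_addr_0 count_predT size_iota.
under eq_bigr => l _ do rewrite big_const_seq iter_addr_0 count_predT size_iota.
rewrite big_seq (eq_bigr (fun _ => N%:R)); last first.
  move=> l; rewrite mem_iota add1n ltnS => /andP[_ lh].
  by rewrite -mulrnA -expnD subnKC.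
rewrite -big_seq big_const_seq iter_addr_0 count_predT size_iota.
by rewrite -!mulrnA -natrD mul1n mulnDr mulnC.
Qed.

Lemma sum_prefix_cut_size :
  \sum_(0 <= m < N) (size (cutEdges h k (prefix m.+1)))%:R = (N * (k + h))%:R :> R.
Proof.
rewrite -sum_edge_length.
under [RHS]eq_bigr do rewrite -[_%:R]mulr1.
rewrite -sum_prefix_cuts; apply: eq_bigr => m _.
by rewrite big_const_seq iter_addr_0 count_predT.
Qed.

Definition levelEdge (l j : nat) : nat * nat := (j * 2 ^ l, j.+1 * 2 ^ l)%N.

End PrefixCuts.

Lemma sum_levelEdges_le (R : numDomainType) (h k : nat) (f : nat * nat -> R) :
  (0 < h)%N -> (forall e, 0 <= f e) ->
  \sum_(1 <= l < h) \sum_(0 <= j < 2 ^ (h - l)) (2 ^ l)%:R * f (levelEdge l j)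
  <= \sum_(e <- edgesG h k) (e.2 - e.1)%:R * f e.
Proof.
move=> h_gt0 f_ge0; rewrite big_edgesG.
apply: ler_wpDl; first by apply: sumr_ge0 => i _; rewrite mulrn_wge0 ?mulr_ge0.
have -> : iota 1 h = index_iota 1 h.+1 by rewrite /index_iota subSS subn0.
rewrite big_nat_recr //=; apply: ler_wpDr.
  by apply: sumr_ge0 => j _; rewrite mulr_ge0.
apply: ler_sum_nat => l _; rewrite /index_iota subn0; apply: ler_sum => j _.
by rewrite /levelEdge /= -mulnBl subSnn mul1n.
Qed.

Section Energy.
Variables (R : realFieldType) (h k : nat).
Local Notation N := (2 ^ h)%N.
Variable D : 'M[R]_N.+1.

Definition block (l j : nat) : 'cV[R]_N.+1 :=
  \sum_(j * 2 ^ l <= s < j.+1 * 2 ^ l) ind R (prefix h s.+1).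

Definition energy (l : nat) : R :=
  \sum_(0 <= j < 2 ^ (h - l)) qf D (block l j) / (2 ^ l)%:R.

Lemma block_split l j : block l.+1 j = block l (2 * j) + block l (2 * j).+1.
Proof.
rewrite /block (@big_cat_nat _ _ _ ((2 * j).+1 * 2 ^ l)); first last.
- by rewrite expnS; nia.
- by rewrite expnS; nia.
by rewrite !expnS; congr (_ + _); apply: congr_big_nat => //; lia.
Qed.

Lemma vdot_levelEdge_block l i j : (i.+1 * 2 ^ l <= N)%N ->
  vdot (chi R h (levelEdge l i)) (block l j) = (i == j)%:R * (2 ^ l)%:R.
Proof.
move=> iN; have p_gt0 : (0 < 2 ^ l)%N by rewrite expn_gt0.
rewrite vdot_sumr big_nat_cond.
under eq_bigr => s /andP[/andP[js sj] _].
  rewrite vdot_chi_prefix; last by rewrite leq_pmul2r // leqnSn.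
  rewrite itv_mul_divn //.
  have -> : (s %/ 2 ^ l)%N = j by apply/eqP; rewrite -itv_mul_divn // js sj.
  over.
by rewrite -big_nat_cond sumr_const_nat -mulnBl subSnn mul1n mulr_natr eq_sym.
Qed.

Hypothesis D_sym : D^T = D.
Hypothesis D_pos : forall x : 'cV[R]_N.+1, x != 0 -> 0 < qf D x.

Lemma energy_sub l : (l < h)%N ->
  energy l - energy l.+1 =
  \sum_(0 <= j < 2 ^ (h - l.+1))
    qf D (block l (2 * j) - block l (2 * j).+1) / (2 ^ l.+1)%:R.
Proof.
move=> lh; have p_neq0 : (2 ^ l)%:R != 0 :> R by rewrite pnatr_eq0 expn_eq0.
rewrite /energy; have -> : (2 ^ (h - l) = 2 * 2 ^ (h - l.+1))%N by rewrite -expnS subnSK.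
rewrite sum_pairs -sumrB; apply: eq_bigr => j _.
have := qf_parallelogram D_sym (block l (2 * j)) (block l (2 * j).+1).
move/(canRL (addrK _)); rewrite block_split => ->.
by rewrite expnS natrM; field.
Qed.

Lemma energy_drop_le l tau : (l < h)%N ->
  tau * N%:R - tau ^+ 2 * (energy l - energy l.+1) <=
  \sum_(0 <= j < 2 ^ (h - l)) (2 ^ l)%:R * effres h D (levelEdge l j).
Proof.
move=> lh; have p_gt0 : 0 < (2 ^ l)%:R :> R by rewrite ltr0n expn_gt0.
have -> : tau * N%:R = \sum_(0 <= j < 2 ^ (h - l.+1)) tau * (2 * (2 ^ l)%:R).
  by rewrite sumr_const_nat subn0 -mulrnAr -natrM -mulrnA -expnS -expnD subnKC.
have -> : (2 ^ (h - l) = 2 * 2 ^ (h - l.+1))%N by rewrite -expnS subnSK.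
rewrite energy_sub // expnS natrM mulr_sumr sum_pairs -sumrB /effres.
apply: ler_sum_nat => j /andP[_ jlt].
have jN : ((2 * j).+2 * 2 ^ l <= N)%N.
  have : (j.+1 * 2 ^ l.+1 <= 2 ^ (h - l.+1) * 2 ^ l.+1)%N by rewrite leq_mul2r jlt orbT.
  by rewrite -expnD subnK // expnS; lia.
apply: qf_invmx_pair_ge => //.
- rewrite vdotBr !vdot_levelEdge_block ?(leq_trans _ jN) ?leq_mul2r ?leqnSn ?ltnSn ?orbT //.
  by rewrite eqxx ltn_eqF // mul1r mul0r subr0.
- rewrite vdotBr !vdot_levelEdge_block ?(leq_trans _ jN) ?leq_mul2r ?leqnSn ?ltnSn ?orbT //.
  by rewrite eqxx gtn_eqF // mul1r mul0r sub0r.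
Qed.

Lemma energy_ge0 l : 0 <= energy l.
Proof. by apply: sumr_ge0 => j _; rewrite divr_ge0 // qf_ge0. Qed.

Lemma energy_decr l : (l < h)%N -> energy l.+1 <= energy l.
Proof.
move=> lh; rewrite -subr_ge0 energy_sub //.
by apply: sumr_ge0 => j _; rewrite divr_ge0 // qf_ge0.
Qed.

Lemma energy0_le : cut_le D (lapG R h k) -> energy 0 <= (N * (k + h))%:R.
Proof.
move=> D_cut; rewrite -(sum_prefix_cut_size R h k) /energy subn0.
apply: ler_sum_nat => j /andP[_ jN].
rewrite expn0 divr1 /block !muln1 big_nat1 -qf_lapG_ind.
by apply: D_cut; [exact: prefix_neq0 | exact: prefix_neqT].
Qed.

Lemma sum_prefix_cut_effres_ge tau : cut_le D (lapG R h k) -> (0 < h)%N ->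
  tau * N%:R * (h - 1)%:R - tau ^+ 2 * (N * (k + h))%:R <=
  \sum_(0 <= m < N) \sum_(e <- cutEdges h k (prefix h m.+1)) effres h D e.
Proof.
move=> D_cut h_gt0; rewrite sum_prefix_cuts.
apply: le_trans (sum_levelEdges_le k h_gt0 (fun e => qf_invmx_ge0 D_sym D_pos (chi R h e))).
have drops : \sum_(1 <= l < h) (tau * N%:R - tau ^+ 2 * (energy l - energy l.+1)) <=
    \sum_(1 <= l < h) \sum_(0 <= j < 2 ^ (h - l)) (2 ^ l)%:R * effres h D (levelEdge l j).
  by apply: ler_sum_nat => l /andP[_ lh]; exact: energy_drop_le.
apply: le_trans drops.
have telescope : \sum_(1 <= l < h) (energy l - energy l.+1) = energy 1 - energy h.
  rewrite (eq_bigr (fun l => - (energy l.+1 - energy l))) => [|l _]; last by rewrite opprB.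
  by rewrite sumrN telescope_sumr // opprB.
have total : energy 1 - energy h <= (N * (k + h))%:R.
  have := energy_ge0 h; have := energy_decr h_gt0; have := energy0_le D_cut; lra.
rewrite sumrB sumr_const_nat -mulr_sumr telescope [tau * N%:R * _]mulr_natr lerD2l lerN2.
by rewrite ler_wpM2l ?sqr_ge0.
Qed.

End Energy.

Lemma exists_ratio_ge (R : realFieldType) (M : nat) (F : nat -> R) (n : nat -> nat) (T : R) :
  (forall i, n i = 0%N -> F i <= 0) ->
  T * \sum_(0 <= i < M) (n i)%:R < \sum_(0 <= i < M) F i ->
  exists2 i, (i < M)%N & T <= F i / (n i)%:R.
Proof.
move=> F_le0 lt_sum.
suff /hasP[i] : has (fun i => T <= F i / (n i)%:R) (index_iota 0 M).
  by rewrite mem_index_iota => /andP[_ iM]; exists i.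
apply: contraTT lt_sum => /hasPn ratio_lt.
rewrite -leNgt mulr_sumr; apply: ler_sum_nat => i iM.
have [ni0|ni_gt0] := posnP (n i); first by rewrite ni0 mulr0 F_le0.
have := ratio_lt i; rewrite mem_index_iota => /(_ iM).
by rewrite -ltNge ltr_pdivrMr ?ltr0n // mulrC => /ltW.
Qed.

(* The maximizer of the quadratic lower bound: it gives N (h-1)^2 / (4 (k+h)), which beats
   the target N h^2 / (8 (k+h)) as soon as h^2 - 4h + 2 > 0. *)
Definition tau_opt (R : fieldType) (h k : nat) : R := (h%:R - 1) / (2 * (k + h)%:R).

Lemma tau_opt_bound (R : realFieldType) (h k N : nat) : (4 <= h)%N -> (0 < N)%N ->
  (h ^ 2)%:R / (8 * (h + k) ^ 2)%:R * (N * (k + h))%:R <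
  tau_opt R h k * N%:R * (h - 1)%:R - tau_opt R h k ^+ 2 * (N * (k + h))%:R.
Proof.
move=> h4 N_gt0.
rewrite natrB ?(leq_trans _ h4) // !natrM (addnC h k) /tau_opt -!expr2.
have K_gt0 : 0 < (k + h)%:R :> R by rewrite ltr0n addn_gt0 (leq_trans _ h4) ?orbT.
have M_gt0 : 0 < N%:R :> R by rewrite ltr0n.
have H4 : 4 <= h%:R :> R by rewrite (ler_nat R 4 h).
move: K_gt0 M_gt0 H4; set K := (k + h)%:R; set M := N%:R; set H := h%:R => K_gt0 M_gt0 H4.
have gap : (H - 1) / (2 * K) * M * (H - 1) - ((H - 1) / (2 * K)) ^+ 2 * (M * K)
    - H ^+ 2 / (8 * K ^+ 2) * (M * K) = M * (H * (H - 4) + 2) / (8 * K).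
  by field; rewrite -natrD; exact: lt0r_neq0.
have HH4 : 0 <= H * (H - 4) by rewrite mulr_ge0 //; lra.
by rewrite -subr_gt0 gap; apply: divr_gt0; [apply: mulr_gt0 | ]; lra.
Qed.

Unset Implicit Arguments.
Theorem mainTheorem14 (R : rcfType) (h k : nat) (hk : (k < h)%N) (k2 : (2 < k)%N)
  (D : 'M[R]_((2 ^ h).+1)) (HD : posdef D) (HDL : cut_le D (lapG R h k)) :
  exists S : {set 'I_((2 ^ h).+1)}, [/\ S != set0, S != [set: 'I_((2 ^ h).+1)] &
    (h ^ 2)%:R / (8 * (h + k) ^ 2)%:R <= cutAvg h k D S].
Proof.
have [D_sym D_pos] := HD.
have h4 : (4 <= h)%N by lia.
have h_gt0 : (0 < h)%N by lia.
have [m mN avg_ge] : exists2 m, (m < 2 ^ h)%N &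
    (h ^ 2)%:R / (8 * (h + k) ^ 2)%:R <= cutAvg h k D (prefix h m.+1).
  apply: (exists_ratio_ge (F := fun m => \sum_(e <- cutEdges h k (prefix h m.+1)) effres h D e)
                          (n := fun m => size (cutEdges h k (prefix h m.+1)))).
    by move=> m /eqP; rewrite size_eq0 => /eqP ->; rewrite big_nil.
  rewrite sum_prefix_cut_size.
  apply: lt_le_trans (sum_prefix_cut_effres_ge D_sym D_pos (tau_opt R h k) HDL h_gt0).
  by apply: tau_opt_bound; rewrite ?expn_gt0.
by exists (prefix h m.+1); split; [apply: prefix_neq0 | apply: prefix_neqT |].
Qed.
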